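(* Let $\nu,a,b\in\mathbb{R}$ with $0<b+\nu<(a+\nu)/4$. Then the function $u_2\mapsto\lambda_2(a,u_2,b)-\lambda_3(a,u_2,b)$ has exactly one zero $u^*$ in the interval $b<u_2<a$, and this zero is simple. Moreover, $\lambda_2(a,u_2,b)-\lambda_3(a,u_2,b)$ is positive for $u^*<u_2<a$ and negative for $b<u_2<u^*$.
   Context: For $-\nu<u_3<u_2<u_1$ define $$I(u_1,u_2,u_3)=\int_{u_3}^{u_2}\frac{\eta+\nu}{\sqrt{(\eta+\nu)(u_1-\eta)(u_2-\eta)(\eta-u_3)}}\,d\eta,$$ and for $i=1,2,3$ $$\lambda_i=u_1+u_2+u_3+2\nu-\frac{I}{\partial I/\partial u_i}.$$ *)

From Stdlib Require Import Reals.
From Coquelicot Require Import Coquelicot.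
Open Scope R_scope.

Definition Iint (nu u1 u2 u3 : R) : R :=
  RInt_gen
    (fun eta => (eta + nu) / sqrt ((eta + nu) * (u1 - eta) * (u2 - eta) * (eta - u3)))
    (at_right u3) (at_left u2).

Definition dI1 (nu u1 u2 u3 : R) : R := Derive (fun x => Iint nu x u2 u3) u1.
Definition dI2 (nu u1 u2 u3 : R) : R := Derive (fun x => Iint nu u1 x u3) u2.
Definition dI3 (nu u1 u2 u3 : R) : R := Derive (fun x => Iint nu u1 u2 x) u3.

Definition lambda1 (nu u1 u2 u3 : R) : R :=
  u1 + u2 + u3 + 2 * nu - Iint nu u1 u2 u3 / dI1 nu u1 u2 u3.
Definition lambda2 (nu u1 u2 u3 : R) : R :=
  u1 + u2 + u3 + 2 * nu - Iint nu u1 u2 u3 / dI2 nu u1 u2 u3.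
Definition lambda3 (nu u1 u2 u3 : R) : R :=
  u1 + u2 + u3 + 2 * nu - Iint nu u1 u2 u3 / dI3 nu u1 u2 u3.

(* Substituting eta = u3 cos^2 t + u2 sin^2 t turns I(a, u2, u3) into the proper integral
   T = int_0^(pi/2) 2 F(eta) dt with F(e) = sqrt (e + nu) / sqrt (a - e), which may be
   differentiated under the integral sign. Then lambda2 - lambda3 = I (dI2 - dI3) / (dI2 dI3)
   with I, dI2, dI3 > 0, and for u3 = b an integration by parts in t gives
   dI2 - dI3 = 2 Phi(u2) / (u2 - b),  Phi(u) = int_b^u F''(x) sqrt ((x - b) (u - x)) dx.
   F'' has the sign of x - x0, x0 = (a - 3 nu) / 4, and the hypothesis says b < x0. Hence
   Phi < 0 on (b, x0]; Phi(u) / sqrt (u - x0) increases at a positive linear rate on (x0, a);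
   and Phi(u) -> +oo as u -> a because F'' blows up like (a - x)^(-5/2). So Phi has a
   single zero u*, and the linear rate makes dI2 - dI3, hence lambda2 - lambda3, cross zero
   at u* with positive derivative. *)

From Stdlib Require Import Reals Lra Psatz.
From Coquelicot Require Import Coquelicot.
Open Scope R_scope.

(* Coquelicot's lemmas are stated for arbitrary normed modules and do not unify with plain
   [R -> R] functions; these are their real specializations. *)
Lemma continuous_Rconst (c x : R) : continuous (fun _ : R => c) x.
Proof. apply continuous_const. Qed.

Lemma continuous_Rid (x : R) : continuous (fun y : R => y) x.
Proof. apply continuous_id. Qed.

Lemma continuous_Rmult (f g : R -> R) x :
  continuous f x -> continuous g x -> continuous (fun y => f y * g y) x.
Proof. apply (continuous_mult f g). Qed.

Lemma continuous_Rplus (f g : R -> R) x :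
  continuous f x -> continuous g x -> continuous (fun y => f y + g y) x.
Proof. apply (continuous_plus f g). Qed.

Lemma continuous_Rminus (f g : R -> R) x :
  continuous f x -> continuous g x -> continuous (fun y => f y - g y) x.
Proof. intros; apply (continuous_plus f (fun y => - g y)); auto. apply (continuous_opp g); auto. Qed.

Lemma continuous_Rcomp (f g : R -> R) x :
  continuous f x -> continuous g (f x) -> continuous (fun y => g (f y)) x.
Proof. apply (continuous_comp f g). Qed.

Lemma ex_RInt_Rcont (f : R -> R) lo hi p q :
  (forall x, lo <= x <= hi -> continuous f x) -> lo <= p <= hi -> lo <= q <= hi ->
  ex_RInt f p q.
Proof.
  intros Hf Hp Hq. apply (ex_RInt_continuous (V:=R_CompleteNormedModule)).
  intros x Hx. apply Hf. unfold Rmin, Rmax in Hx. destruct (Rle_dec p q); lra.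
Qed.

Lemma RInt_Rscal (f : R -> R) k p q : ex_RInt f p q -> RInt (fun x => k * f x) p q = k * RInt f p q.
Proof. exact (RInt_scal (V:=R_CompleteNormedModule) f p q k). Qed.

Lemma RInt_Rminus (f g : R -> R) p q : ex_RInt f p q -> ex_RInt g p q ->
  RInt (fun x => f x - g x) p q = RInt f p q - RInt g p q.
Proof. exact (RInt_minus (V:=R_CompleteNormedModule) f g p q). Qed.

Lemma RInt_Rext (f g : R -> R) p q :
  (forall x, Rmin p q < x < Rmax p q -> f x = g x) -> RInt f p q = RInt g p q.
Proof. apply RInt_ext. Qed.

Lemma RInt_Rconst (c p q : R) : RInt (fun _ => c) p q = (q - p) * c.
Proof. rewrite RInt_const. reflexivity. Qed.

Lemma locally_interval lo hi x : lo < x < hi -> locally x (fun u => lo < u < hi).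
Proof.
  intros Hx. assert (Hr : 0 < Rmin (x - lo) (hi - x)) by (apply Rmin_pos; lra).
  exists (mkposreal _ Hr). intros y Hy. change (Rabs (y - x) < Rmin (x - lo) (hi - x)) in Hy.
  apply Rabs_def2 in Hy. generalize (Rmin_l (x - lo) (hi - x)) (Rmin_r (x - lo) (hi - x)). lra.
Qed.

Lemma derive_ge_of_linear_minorant (f : R -> R) x l m d :
  is_derive f x l -> 0 < d -> (forall y, x < y < x + d -> f x + m * (y - x) <= f y) -> m <= l.
Proof.
  intros Hd Hdp Hy. apply is_derive_Reals in Hd.
  destruct (Rle_or_lt m l) as [|Hlt]; auto. exfalso.
  destruct (Hd (m - l) ltac:(lra)) as [del Hdel].
  set (h := Rmin del d / 2).
  assert (Hh : 0 < h) by (unfold h; generalize (Rmin_pos del d (cond_pos del) Hdp); lra).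
  assert (Hh1 : h < del) by (unfold h; generalize (Rmin_l del d) (cond_pos del); lra).
  assert (Hh2 : h < d) by (unfold h; generalize (Rmin_r del d) (Rmin_pos del d (cond_pos del) Hdp); lra).
  specialize (Hdel h ltac:(lra) ltac:(rewrite Rabs_pos_eq; lra)).
  specialize (Hy (x + h) ltac:(lra)). replace (x + h - x) with h in Hy by ring.
  assert (m <= (f (x + h) - f x) / h).
  { apply Rmult_le_reg_r with h; [lra|]. unfold Rdiv. rewrite Rmult_assoc, Rinv_l, Rmult_1_r by lra. lra. }
  apply Rabs_def2 in Hdel. lra.
Qed.

Lemma is_derive_mult_root (p q : R -> R) x lq :
  ex_derive p x -> is_derive q x lq -> q x = 0 -> is_derive (fun y => p y * q y) x (p x * lq).
Proof.
  intros [lp Hp] Hq Hq0.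
  replace (p x * lq) with (lp * q x + p x * lq) by (rewrite Hq0; ring).
  exact (is_derive_mult p q x lp lq Hp Hq Rmult_comm).
Qed.

Lemma sqrt_sub_ge_half p1 p2 : 0 <= p1 <= p2 -> p2 <= 1 -> (p2 - p1) / 2 <= sqrt p2 - sqrt p1.
Proof.
  intros. assert (E1 := sqrt_sqrt p1 ltac:(lra)). assert (E2 := sqrt_sqrt p2 ltac:(lra)).
  assert (0 <= sqrt p1) by apply sqrt_pos.
  assert (sqrt p2 <= 1) by (rewrite <- sqrt_1; apply sqrt_le_1_alt; lra).
  assert (sqrt p1 <= sqrt p2) by (apply sqrt_le_1_alt; lra).
  nra.
Qed.

Section Integrand.

Variables nu a : R.

Definition F e := sqrt (e + nu) / sqrt (a - e).
Definition dF e := (a + nu) / (2 * sqrt (e + nu) * ((a - e) * sqrt (a - e))).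
Definition d2F e :=
  (a + nu) * (4 * (e + nu) - (a + nu)) /
  (4 * ((e + nu) * sqrt (e + nu)) * ((a - e) * (a - e) * sqrt (a - e))).

Definition infl := (a - 3 * nu) / 4.

Lemma is_derive_F e : -nu < e < a -> is_derive F e (dF e).
Proof.
  intros He. unfold F, dF.
  assert (Hs1 := sqrt_lt_R0 (e + nu) ltac:(lra)).
  assert (Hs2 := sqrt_lt_R0 (a - e) ltac:(lra)).
  auto_derive.
  - change (a + - e) with (a - e). repeat split; lra.
  - assert (E1 := sqrt_sqrt (e + nu) ltac:(lra)).
    assert (E2 := sqrt_sqrt (a - e) ltac:(lra)).
    replace (a + - e) with (a - e) by ring.
    replace (a + nu) with ((e + nu) + (a - e)) by ring.
    set (x := sqrt (e + nu)) in *. set (y := sqrt (a - e)) in *.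
    rewrite <- E1, <- E2. field. lra.
Qed.

Lemma is_derive_dF e : -nu < e < a -> is_derive dF e (d2F e).
Proof.
  intros He. unfold dF, d2F.
  assert (Hs1 := sqrt_lt_R0 (e + nu) ltac:(lra)).
  assert (Hs2 := sqrt_lt_R0 (a - e) ltac:(lra)).
  auto_derive.
  - change (a + - e) with (a - e). repeat split; try lra.
    apply Rgt_not_eq. repeat apply Rmult_lt_0_compat; lra.
  - assert (E1 := sqrt_sqrt (e + nu) ltac:(lra)).
    assert (E2 := sqrt_sqrt (a - e) ltac:(lra)).
    replace (a + - e) with (a - e) by ring.
    set (x := sqrt (e + nu)) in *. set (y := sqrt (a - e)) in *.
    replace (a + nu) with (x * x + y * y) by lra.
    rewrite <- E1, <- E2. field. lra.
Qed.

Lemma continuous_F e : -nu < e < a -> continuous F e.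
Proof. intros He. apply (ex_derive_continuous F). eexists. now apply is_derive_F. Qed.

Lemma continuous_dF e : -nu < e < a -> continuous dF e.
Proof. intros He. apply (ex_derive_continuous dF). eexists. now apply is_derive_dF. Qed.

Lemma continuous_d2F e : -nu < e < a -> continuous d2F e.
Proof.
  intros He. apply (ex_derive_continuous d2F). unfold d2F.
  assert (Hs1 := sqrt_lt_R0 (e + nu) ltac:(lra)).
  assert (Hs2 := sqrt_lt_R0 (a - e) ltac:(lra)).
  auto_derive. change (a + - e) with (a - e). repeat split; try lra.
  apply Rgt_not_eq. repeat apply Rmult_lt_0_compat; lra.
Qed.

Lemma F_pos e : -nu < e < a -> 0 < F e.
Proof. intros. unfold F. apply Rdiv_lt_0_compat; apply sqrt_lt_R0; lra. Qed.

Lemma dF_pos e : -nu < e < a -> 0 < dF e.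
Proof.
  intros. unfold dF.
  assert (Hs1 := sqrt_lt_R0 (e + nu) ltac:(lra)).
  assert (Hs2 := sqrt_lt_R0 (a - e) ltac:(lra)).
  apply Rdiv_lt_0_compat; [lra|]. repeat apply Rmult_lt_0_compat; lra.
Qed.

Lemma d2F_denominator_pos e : -nu < e < a ->
  0 < 4 * ((e + nu) * sqrt (e + nu)) * ((a - e) * (a - e) * sqrt (a - e)).
Proof.
  intros. assert (Hs1 := sqrt_lt_R0 (e + nu) ltac:(lra)).
  assert (Hs2 := sqrt_lt_R0 (a - e) ltac:(lra)).
  repeat apply Rmult_lt_0_compat; lra.
Qed.

Lemma d2F_neg e : -nu < e < infl -> d2F e < 0.
Proof.
  intros. unfold infl, d2F in *. apply Rdiv_neg_pos.
  - apply Rmult_pos_neg; lra.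
  - apply d2F_denominator_pos; lra.
Qed.

Lemma d2F_pos e : infl < e < a -> 0 < d2F e.
Proof.
  intros. unfold infl, d2F in *. apply Rdiv_lt_0_compat.
  - apply Rmult_lt_0_compat; lra.
  - apply d2F_denominator_pos; lra.
Qed.

Lemma d2F_ge x1 x e : infl < x1 -> x1 <= x -> a - 2 * e <= x -> x < a ->
  (a + nu) * (4 * (x1 + nu) - (a + nu)) /
  (4 * ((a + nu) * sqrt (a + nu)) * ((2 * e) * (2 * e) * sqrt (2 * e))) <= d2F x.
Proof.
  intros H1 H2 H3 H4. unfold infl, d2F in *.
  assert (Hsx := sqrt_lt_R0 (x + nu) ltac:(lra)).
  assert (Hsa := sqrt_lt_R0 (a - x) ltac:(lra)).
  assert (sqrt (x + nu) <= sqrt (a + nu)) by (apply sqrt_le_1_alt; lra).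
  assert (sqrt (a - x) <= sqrt (2 * e)) by (apply sqrt_le_1_alt; lra).
  assert (Hd : 0 < 4 * ((x + nu) * sqrt (x + nu)) * ((a - x) * (a - x) * sqrt (a - x)))
    by (apply d2F_denominator_pos; lra).
  unfold Rdiv. apply Rmult_le_compat.
  - apply Rmult_le_pos; lra.
  - left. apply Rinv_0_lt_compat. assert (0 < sqrt (2 * e)) by (apply sqrt_lt_R0; lra).
    repeat apply Rmult_lt_0_compat; lra.
  - apply Rmult_le_compat_l; lra.
  - apply Rinv_le_contravar; [exact Hd|].
    assert ((x + nu) * sqrt (x + nu) <= (a + nu) * sqrt (a + nu)) by (apply Rmult_le_compat; lra).
    assert ((a - x) * (a - x) <= (2 * e) * (2 * e)) by (apply Rmult_le_compat; lra).
    assert ((a - x) * (a - x) * sqrt (a - x) <= (2 * e) * (2 * e) * sqrt (2 * e))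
      by (apply Rmult_le_compat; nra).
    assert (0 <= (a - x) * (a - x) * sqrt (a - x)) by (apply Rmult_le_pos; nra).
    apply Rmult_le_compat; nra.
Qed.

End Integrand.

(** * Differentiation under the integral sign *)

Lemma continuity_2d_pt_snd (w : R -> R) x t :
  continuous w t -> continuity_2d_pt (fun _ v => w v) x t.
Proof.
  intros H. apply (continuity_1d_2d_pt_comp w (fun _ v => v)).
  - now apply continuity_pt_filterlim.
  - apply continuity_2d_pt_id2.
Qed.

Section AffineParameter.

Variables (w al be G G' : R -> R) (lo hi c d : R).
Hypotheses (Hw : forall t, continuous w t) (Hal : forall t, continuous al t)
  (Hbe : forall t, continuous be t)
  (HG : forall y, lo < y < hi -> is_derive G y (G' y))
  (HG' : forall y, lo < y < hi -> continuous G' y).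

Let inner_derive t u : lo < al t + u * be t < hi ->
  is_derive (fun u => w t * G (al t + u * be t)) u (w t * be t * G' (al t + u * be t)).
Proof.
  intros H. rewrite Rmult_assoc. apply is_derive_scal.
  apply (is_derive_comp G (fun u => al t + u * be t)); [now apply HG|].
  auto_derive; auto. ring.
Qed.

Lemma is_derive_RInt_affine_param x :
  locally x (fun u => forall t, lo < al t + u * be t < hi) ->
  is_derive (fun u => RInt (fun t => w t * G (al t + u * be t)) c d) x
    (RInt (fun t => w t * be t * G' (al t + x * be t)) c d).
Proof.
  intros Hloc.
  assert (Hx : forall t, lo < al t + x * be t < hi).
  { intros t. destruct Hloc as [eps He]. apply He, ball_center. }
  replace (RInt (fun t => w t * be t * G' (al t + x * be t)) c d)
    with (RInt (fun t => Derive (fun u => w t * G (al t + u * be t)) x) c d).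
  2:{ apply RInt_ext. intros t _. apply is_derive_unique, inner_derive, Hx. }
  apply (is_derive_RInt_param (fun u t => w t * G (al t + u * be t))).
  - eapply filter_imp; [|exact Hloc]. intros u Hu t _. eexists. now apply inner_derive.
  - intros t _. destruct Hloc as [eps He].
    apply continuity_2d_pt_ext_loc with (f := fun u v => w v * be v * G' (al v + u * be v)).
    + exists eps. intros u v Hu _. symmetry. apply is_derive_unique, inner_derive, He, Hu.
    + apply continuity_2d_pt_mult; [apply continuity_2d_pt_mult; now apply continuity_2d_pt_snd|].
      apply (continuity_1d_2d_pt_comp G' (fun u v => al v + u * be v)).
      * apply continuity_pt_filterlim, HG', Hx.
      * apply continuity_2d_pt_plus; [now apply continuity_2d_pt_snd|].
        apply continuity_2d_pt_mult; [apply continuity_2d_pt_id1 | now apply continuity_2d_pt_snd].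
  - eapply filter_imp; [|exact Hloc]. intros u Hu.
    apply (ex_RInt_continuous (V:=R_CompleteNormedModule)). intros t _.
    apply continuous_Rmult; [apply Hw|].
    apply continuous_Rcomp with (f := fun t => al t + u * be t).
    + apply continuous_Rplus; [apply Hal | apply continuous_Rmult; [apply continuous_Rconst | apply Hbe]].
    + apply (ex_derive_continuous G). eexists. now apply HG.
Qed.

End AffineParameter.

Definition sn2 t := sin t * sin t.
Definition cs2 t := cos t * cos t.

Definition eta u2 u3 t := u3 * cs2 t + u2 * sn2 t.

Lemma sn2_add_cs2 t : sn2 t + cs2 t = 1.
Proof. unfold sn2, cs2. rewrite <- (sin2_cos2 t). unfold Rsqr. ring. Qed.

Lemma sn2_bounds t : 0 <= sn2 t <= 1.
Proof. assert (H := sn2_add_cs2 t). unfold sn2, cs2 in *. split; nra. Qed.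

Lemma continuous_sn2 t : continuous sn2 t.
Proof. apply (continuous_Rmult sin sin); apply continuous_sin. Qed.

Lemma continuous_cs2 t : continuous cs2 t.
Proof. apply (continuous_Rmult cos cos); apply continuous_cos. Qed.

Lemma continuous_sin_cos k t : continuous (fun t => k * sin t * cos t) t.
Proof.
  apply (continuous_Rmult (fun t => k * sin t) cos); [|apply continuous_cos].
  apply (continuous_Rmult (fun _ => k) sin); [apply continuous_Rconst | apply continuous_sin].
Qed.

Lemma continuous_eta u2 u3 t : continuous (eta u2 u3) t.
Proof.
  unfold eta. apply continuous_Rplus; apply continuous_Rmult;
    auto using continuous_Rconst, continuous_sn2, continuous_cs2.
Qed.

Lemma is_derive_eta u2 u3 t : is_derive (eta u2 u3) t (2 * (u2 - u3) * sin t * cos t).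
Proof. unfold eta, cs2, sn2. auto_derive; auto. ring. Qed.

Lemma eta_0 u2 u3 : eta u2 u3 0 = u3.
Proof. unfold eta, cs2, sn2. rewrite cos_0, sin_0. ring. Qed.

Lemma eta_PI2 u2 u3 : eta u2 u3 (PI / 2) = u2.
Proof. unfold eta, cs2, sn2. rewrite cos_PI2, sin_PI2. ring. Qed.

Lemma sin_cos_pos t : 0 < t < PI / 2 -> 0 < sin t /\ 0 < cos t.
Proof. intros. split; [apply sin_gt_0 | apply cos_gt_0]; lra. Qed.

Lemma eta_between lo hi u2 u3 t : lo < u2 < hi -> lo < u3 < hi -> lo < eta u2 u3 t < hi.
Proof.
  intros. unfold eta. assert (H1 := sn2_add_cs2 t). assert (H2 := sn2_bounds t).
  replace (cs2 t) with (1 - sn2 t) by lra. set (s := sn2 t) in *.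
  destruct (Rle_or_lt u3 u2).
  - assert ((u2 - u3) * s <= u2 - u3) by nra. nra.
  - assert ((u3 - u2) * s <= u3 - u2) by nra. nra.
Qed.

Lemma eta_le u2 u3 t : u3 <= u2 -> u3 <= eta u2 u3 t <= u2.
Proof.
  intros. unfold eta. assert (H1 := sn2_add_cs2 t). assert (H2 := sn2_bounds t). nra.
Qed.

Lemma eta_lt u2 u3 t : u3 < u2 -> 0 < t < PI / 2 -> u3 < eta u2 u3 t < u2.
Proof.
  intros. destruct (sin_cos_pos t H0). assert (HH := sn2_add_cs2 t). unfold eta.
  assert (0 < sn2 t) by (unfold sn2; nra). assert (0 < cs2 t) by (unfold cs2; nra). nra.
Qed.

(* This is why the endpoint singularities of [I] disappear after the substitution. *)
Lemma eta_gap_product u2 u3 t :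
  (eta u2 u3 t - u3) * (u2 - eta u2 u3 t) = ((u2 - u3) * sin t * cos t) * ((u2 - u3) * sin t * cos t).
Proof.
  transitivity ((u2 - u3) * (u2 - u3) * sn2 t * cs2 t).
  - unfold eta. replace (cs2 t) with (1 - sn2 t) by (generalize (sn2_add_cs2 t); lra). ring.
  - unfold sn2, cs2. ring.
Qed.

(** * [I] as a proper integral *)

Definition integrand nu a u2 u3 e :=
  (e + nu) / sqrt ((e + nu) * (a - e) * (u2 - e) * (e - u3)).

Definition T nu a u2 u3 : R := RInt (fun t => 2 * F nu a (eta u2 u3 t)) 0 (PI / 2).

Lemma integrand_eta nu a u2 u3 t : -nu < u3 -> u3 < u2 -> u2 < a -> 0 < t < PI / 2 ->
  (2 * (u2 - u3) * sin t * cos t) * integrand nu a u2 u3 (eta u2 u3 t) = 2 * F nu a (eta u2 u3 t).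
Proof.
  intros H1 H2 H3 Ht. destruct (sin_cos_pos t Ht) as [Hs Hc].
  assert (He := eta_le u2 u3 t ltac:(lra)).
  assert (E := eta_gap_product u2 u3 t).
  set (e := eta u2 u3 t) in *. set (k := (u2 - u3) * sin t * cos t) in *.
  assert (Hk : 0 < k) by (unfold k; repeat apply Rmult_lt_0_compat; lra).
  unfold integrand, F.
  replace ((e + nu) * (a - e) * (u2 - e) * (e - u3)) with ((e + nu) * (a - e) * (k * k)) by (rewrite <- E; ring).
  rewrite sqrt_mult_alt, sqrt_square, sqrt_mult_alt by nra.
  assert (Hs1 := sqrt_lt_R0 (e + nu) ltac:(lra)).
  assert (Hs2 := sqrt_lt_R0 (a - e) ltac:(lra)).
  rewrite <- (sqrt_sqrt (e + nu)) at 1 by lra.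
  unfold k. field. repeat split; lra.
Qed.

Lemma continuous_integrand nu a u2 u3 e : -nu < u3 -> u2 < a -> u3 < e < u2 ->
  continuous (integrand nu a u2 u3) e.
Proof.
  intros. apply (ex_derive_continuous (integrand nu a u2 u3)). unfold integrand.
  assert (0 < (e + nu) * (a - e) * (u2 - e) * (e - u3)) by (repeat apply Rmult_lt_0_compat; lra).
  auto_derive. repeat split; auto. apply Rgt_not_eq, sqrt_lt_R0; auto.
Qed.

Lemma continuous_F_eta nu a u2 u3 t : -nu < u3 -> u3 <= u2 -> u2 < a ->
  continuous (fun t => 2 * F nu a (eta u2 u3 t)) t.
Proof.
  intros. apply continuous_Rmult; [apply continuous_Rconst|].
  apply continuous_Rcomp with (f := eta u2 u3); [apply continuous_eta|].
  apply continuous_F. generalize (eta_le u2 u3 t H0). lra.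
Qed.

Definition theta u2 u3 x := asin (sqrt ((x - u3) / (u2 - u3))).

Lemma sqrt_unit_interval r : 0 <= r <= 1 -> 0 <= sqrt r <= 1.
Proof. intros. split; [apply sqrt_pos|]. rewrite <- sqrt_1. apply sqrt_le_1_alt. lra. Qed.

Lemma asin_unit_interval r : 0 <= r <= 1 -> 0 <= asin r <= PI / 2.
Proof.
  intros. assert (Hb := asin_bound r). split; [|lra].
  destruct (Rle_or_lt 0 (asin r)) as [|Hn]; auto.
  assert (sin (asin r) < 0) by (apply sin_lt_0_var; lra).
  rewrite sin_asin in *; lra.
Qed.

Lemma theta_spec u2 u3 x : u3 < u2 -> u3 <= x <= u2 ->
  0 <= theta u2 u3 x <= PI / 2 /\ eta u2 u3 (theta u2 u3 x) = x.
Proof.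
  intros. set (r := (x - u3) / (u2 - u3)).
  assert (Hr : 0 <= r <= 1).
  { unfold r. split; [apply Rdiv_le_0_compat; lra|].
    apply Rmult_le_reg_r with (u2 - u3); [lra|]. field_simplify; lra. }
  assert (Hs := sqrt_unit_interval r Hr).
  unfold theta. fold r. split; [now apply asin_unit_interval|].
  unfold eta. replace (cs2 (asin (sqrt r))) with (1 - sn2 (asin (sqrt r)))
    by (generalize (sn2_add_cs2 (asin (sqrt r))); lra).
  unfold sn2. rewrite sin_asin, sqrt_sqrt by lra. unfold r. field. lra.
Qed.

Lemma theta_strict u2 u3 x : u3 < x < u2 -> 0 < theta u2 u3 x < PI / 2.
Proof.
  intros Hx. destruct (theta_spec u2 u3 x ltac:(lra) ltac:(lra)) as [[H0 H1] He].
  assert (Hne : theta u2 u3 x <> 0 /\ theta u2 u3 x <> PI / 2).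
  { split; intros E; rewrite E in He; [rewrite eta_0 in He | rewrite eta_PI2 in He]; lra. }
  lra.
Qed.

(* Stdlib only knows [asin] to be continuous inside [(-1, 1)]; this form handles [x -> u2]. *)
Lemma theta_reflect u2 u3 x : u3 < u2 -> u3 <= x <= u2 ->
  theta u2 u3 x = PI / 2 - asin (sqrt ((u2 - x) / (u2 - u3))).
Proof.
  intros. destruct (theta_spec u2 u3 x H H0) as [Hb He].
  set (th := theta u2 u3 x) in *.
  assert (Hc : 0 <= cos th) by (apply cos_ge_0; lra).
  assert (E : (u2 - x) / (u2 - u3) = cos th * cos th).
  { rewrite <- He. unfold eta. replace (sn2 th) with (1 - cs2 th) by (generalize (sn2_add_cs2 th); lra).
    unfold cs2. field. lra. }
  rewrite E, sqrt_square, <- sin_shift, asin_sin by lra. ring.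
Qed.

Lemma continuous_asin_sqrt (f : R -> R) x : continuous f x -> f x = 0 ->
  continuous (fun y => asin (sqrt (f y))) x.
Proof.
  intros Hf Hx. apply continuous_Rcomp with (f := fun y => sqrt (f y)).
  - now apply continuous_sqrt_comp.
  - rewrite Hx, sqrt_0. apply continuity_pt_filterlim, derivable_continuous_pt, derivable_pt_asin. lra.
Qed.

Lemma at_right_interval lo hi : lo < hi -> at_right lo (fun x => lo < x < hi).
Proof.
  intros. assert (Hd : 0 < hi - lo) by lra. exists (mkposreal _ Hd).
  intros y Hy Hy2. change (Rabs (y - lo) < hi - lo) in Hy. apply Rabs_def2 in Hy. lra.
Qed.

Lemma at_left_interval lo hi : lo < hi -> at_left hi (fun x => lo < x < hi).
Proof.
  intros. assert (Hd : 0 < hi - lo) by lra. exists (mkposreal _ Hd).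
  intros y Hy Hy2. change (Rabs (y - hi) < hi - lo) in Hy. apply Rabs_def2 in Hy. lra.
Qed.

Lemma theta_at_right u2 u3 : u3 < u2 -> filterlim (theta u2 u3) (at_right u3) (locally 0).
Proof.
  intros. eapply filterlim_filter_le_1; [apply filter_le_within|].
  assert (E : (u3 - u3) / (u2 - u3) = 0) by (field; lra).
  assert (Hc : continuous (fun x => asin (sqrt ((x - u3) / (u2 - u3)))) u3).
  { apply (continuous_asin_sqrt (fun x => (x - u3) / (u2 - u3))); [|exact E].
    apply continuous_Rmult; [apply continuous_Rminus|]; auto using continuous_Rid, continuous_Rconst. }
  unfold continuous in Hc. cbv beta in Hc. rewrite E, sqrt_0, asin_0 in Hc. exact Hc.
Qed.

Lemma theta_at_left u2 u3 : u3 < u2 -> filterlim (theta u2 u3) (at_left u2) (locally (PI / 2)).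
Proof.
  intros. apply filterlim_ext_loc with (fun x => PI / 2 - asin (sqrt ((u2 - x) / (u2 - u3)))).
  - eapply filter_imp; [|exact (at_left_interval u3 u2 H)].
    intros x Hx. symmetry. apply theta_reflect; lra.
  - eapply filterlim_filter_le_1; [apply filter_le_within|].
    assert (E : (u2 - u2) / (u2 - u3) = 0) by (field; lra).
    assert (Hc : continuous (fun x => PI / 2 - asin (sqrt ((u2 - x) / (u2 - u3)))) u2).
    { apply continuous_Rminus; [apply continuous_Rconst|].
      apply (continuous_asin_sqrt (fun x => (u2 - x) / (u2 - u3))); [|exact E].
      apply continuous_Rmult; [apply continuous_Rminus|]; auto using continuous_Rid, continuous_Rconst. }
    unfold continuous in Hc. cbv beta in Hc. rewrite E, sqrt_0, asin_0, Rminus_0_r in Hc. exact Hc.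
Qed.

Lemma is_RInt_integrand nu a u2 u3 x y : -nu < u3 -> u2 < a -> u3 < x < u2 -> u3 < y < u2 ->
  is_RInt (integrand nu a u2 u3) x y
    (RInt (fun t => 2 * F nu a (eta u2 u3 t)) (theta u2 u3 x) (theta u2 u3 y)).
Proof.
  intros H1 H3 Hx Hy.
  destruct (theta_spec u2 u3 x ltac:(lra) ltac:(lra)) as [_ Ex].
  destruct (theta_spec u2 u3 y ltac:(lra) ltac:(lra)) as [_ Ey].
  assert (Bx := theta_strict u2 u3 x Hx). assert (By := theta_strict u2 u3 y Hy).
  set (p := theta u2 u3 x) in *. set (q := theta u2 u3 y) in *.
  assert (Hin : forall t, Rmin p q <= t <= Rmax p q -> 0 < t < PI / 2).
  { intros t Ht. unfold Rmin, Rmax in Ht. destruct (Rle_dec p q); lra. }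
  assert (Sub := RInt_comp (V:=R_CompleteNormedModule) (integrand nu a u2 u3) (eta u2 u3)
     (fun t => 2 * (u2 - u3) * sin t * cos t) p q).
  simpl in Sub. rewrite Ex, Ey in Sub.
  replace (RInt (fun t => 2 * F nu a (eta u2 u3 t)) p q) with (RInt (integrand nu a u2 u3) x y).
  - apply (RInt_correct (V:=R_CompleteNormedModule)), (ex_RInt_continuous (V:=R_CompleteNormedModule)).
    intros z Hz. apply continuous_integrand; try lra.
    unfold Rmin, Rmax in Hz. destruct (Rle_dec x y); lra.
  - rewrite <- Sub.
    + apply RInt_Rext. intros t Ht. apply integrand_eta; try lra. apply Hin. lra.
    + intros t Ht. apply continuous_integrand; try lra. apply eta_lt; [lra | now apply Hin].
    + intros t _. split; [apply is_derive_eta | apply continuous_sin_cos].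
Qed.

Lemma filter_prod_locally_le (x y : R) :
  filter_le (filter_prod (locally x) (locally y)) (locally (x, y)).
Proof.
  intros P [e He]. apply Filter_prod with (ball x e) (ball y e).
  - now exists e.
  - now exists e.
  - intros u v Hu Hv. apply He. now split.
Qed.

Lemma is_RInt_gen_integrand nu a u2 u3 : -nu < u3 -> u3 < u2 -> u2 < a ->
  is_RInt_gen (integrand nu a u2 u3) (at_right u3) (at_left u2) (T nu a u2 u3).
Proof.
  intros H1 H2 H3.
  set (h := fun t => 2 * F nu a (eta u2 u3 t)).
  assert (Lim : filterlim (fun ab : R * R => RInt h (theta u2 u3 (fst ab)) (theta u2 u3 (snd ab)))
                  (filter_prod (at_right u3) (at_left u2)) (locally (T nu a u2 u3))).
  { apply (filterlim_comp_2 (G := locally 0) (H := locally (PI / 2))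
             (fun ab : R * R => theta u2 u3 (fst ab))
             (fun ab : R * R => theta u2 u3 (snd ab)) (fun p q => RInt h p q)).
    - eapply filterlim_comp; [apply filterlim_fst | now apply theta_at_right].
    - eapply filterlim_comp; [apply filterlim_snd | now apply theta_at_left].
    - eapply filterlim_filter_le_1; [apply filter_prod_locally_le|].
      apply (continuous_RInt h 0 (PI / 2) (fun p q => RInt h p q)).
      apply filter_forall. intros z. apply (RInt_correct (V:=R_CompleteNormedModule)).
      apply (ex_RInt_continuous (V:=R_CompleteNormedModule)). intros t _.
      apply continuous_F_eta; lra. }
  intros P HP.
  assert (Ev : filter_prod (at_right u3) (at_left u2)
                 (fun ab : R * R => u3 < fst ab < u2 /\ u3 < snd ab < u2)).
  { apply Filter_prod with (fun x => u3 < x < u2) (fun x => u3 < x < u2);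
      auto using at_right_interval, at_left_interval. }
  specialize (Lim P HP). unfold filtermap in Lim. unfold filtermapi.
  generalize (filter_and _ _ Lim Ev). apply filter_imp.
  intros [x y] [HPxy [Hx Hy]]. simpl in *.
  eexists. split; [apply is_RInt_integrand; lra | exact HPxy].
Qed.

Lemma Iint_eq_T nu a u2 u3 : -nu < u3 -> u3 < u2 -> u2 < a -> Iint nu a u2 u3 = T nu a u2 u3.
Proof.
  intros. apply (is_RInt_gen_unique (V:=R_CompleteNormedModule) (integrand nu a u2 u3)).
  now apply is_RInt_gen_integrand.
Qed.

Definition dT2 nu a u2 u3 : R := RInt (fun t => 2 * sn2 t * dF nu a (eta u2 u3 t)) 0 (PI / 2).
Definition dT3 nu a u2 u3 : R := RInt (fun t => 2 * cs2 t * dF nu a (eta u2 u3 t)) 0 (PI / 2).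
Definition ddT2 nu a u2 u3 : R := RInt (fun t => 2 * sn2 t * sn2 t * d2F nu a (eta u2 u3 t)) 0 (PI / 2).
Definition ddT3 nu a u2 u3 : R := RInt (fun t => 2 * cs2 t * sn2 t * d2F nu a (eta u2 u3 t)) 0 (PI / 2).

Lemma continuous_comp_eta (G : R -> R) lo hi u2 u3 t :
  (forall e, lo < e < hi -> continuous G e) -> lo < u2 < hi -> lo < u3 < hi ->
  continuous (fun t => G (eta u2 u3 t)) t.
Proof.
  intros HG H2 H3. apply continuous_Rcomp with (f := eta u2 u3); [apply continuous_eta|].
  now apply HG, eta_between.
Qed.

Lemma locally_eta_between lo hi u2 u3 : lo < u2 < hi -> lo < u3 < hi ->
  locally u2 (fun u => forall t, lo < eta u u3 t < hi).
Proof.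
  intros. eapply filter_imp; [|now apply locally_interval]. intros u Hu t. now apply eta_between.
Qed.

Section Derivatives.

Variables nu a u2 u3 : R.
Hypotheses (H2 : -nu < u2 < a) (H3 : -nu < u3 < a).

Let eta_in : locally u2 (fun u => forall t, -nu < eta u u3 t < a).
Proof. now apply locally_eta_between. Qed.

Lemma is_derive_T_u2 : is_derive (fun x => T nu a x u3) u2 (dT2 nu a u2 u3).
Proof.
  unfold T, dT2.
  apply (is_derive_RInt_affine_param (fun _ => 2) (fun t => u3 * cs2 t) sn2 (F nu a) (dF nu a) (-nu) a);
    auto using continuous_Rconst, continuous_sn2, is_derive_F, continuous_dF.
  intros t. apply continuous_Rmult; auto using continuous_Rconst, continuous_cs2.
Qed.

Lemma is_derive_T_u3 : is_derive (fun x => T nu a u2 x) u3 (dT3 nu a u2 u3).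
Proof.
  assert (Hs : forall x t, eta u2 x t = u2 * sn2 t + x * cs2 t) by (intros; unfold eta; ring).
  unfold T, dT3. apply is_derive_ext with (fun x => RInt (fun t => 2 * F nu a (u2 * sn2 t + x * cs2 t)) 0 (PI / 2)).
  { intros x. apply RInt_Rext. intros t _. now rewrite Hs. }
  replace (RInt (fun t => 2 * cs2 t * dF nu a (eta u2 u3 t)) 0 (PI / 2))
    with (RInt (fun t => 2 * cs2 t * dF nu a (u2 * sn2 t + u3 * cs2 t)) 0 (PI / 2))
    by (apply RInt_Rext; intros t _; now rewrite Hs).
  apply (is_derive_RInt_affine_param (fun _ => 2) (fun t => u2 * sn2 t) cs2 (F nu a) (dF nu a) (-nu) a);
    auto using continuous_Rconst, continuous_cs2, is_derive_F, continuous_dF.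
  - intros t. apply continuous_Rmult; auto using continuous_Rconst, continuous_sn2.
  - eapply filter_imp; [|now apply locally_interval]. intros u Hu t. rewrite <- Hs. now apply eta_between.
Qed.

Lemma is_derive_dT2 : is_derive (fun x => dT2 nu a x u3) u2 (ddT2 nu a u2 u3).
Proof.
  unfold dT2, ddT2.
  apply (is_derive_RInt_affine_param (fun t => 2 * sn2 t) (fun t => u3 * cs2 t) sn2 (dF nu a) (d2F nu a) (-nu) a);
    auto using continuous_sn2, is_derive_dF, continuous_d2F.
  - intros t. apply continuous_Rmult; auto using continuous_Rconst, continuous_sn2.
  - intros t. apply continuous_Rmult; auto using continuous_Rconst, continuous_cs2.
Qed.

Lemma is_derive_dT3 : is_derive (fun x => dT3 nu a x u3) u2 (ddT3 nu a u2 u3).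
Proof.
  unfold dT3, ddT3.
  apply (is_derive_RInt_affine_param (fun t => 2 * cs2 t) (fun t => u3 * cs2 t) sn2 (dF nu a) (d2F nu a) (-nu) a);
    auto using continuous_sn2, is_derive_dF, continuous_d2F.
  - intros t. apply continuous_Rmult; auto using continuous_Rconst, continuous_cs2.
  - intros t. apply continuous_Rmult; auto using continuous_Rconst, continuous_cs2.
Qed.

Lemma continuous_dF_eta t : continuous (fun t => dF nu a (eta u2 u3 t)) t.
Proof. apply (continuous_comp_eta (dF nu a) (-nu) a); auto using continuous_dF. Qed.

Lemma continuous_d2F_eta t : continuous (fun t => d2F nu a (eta u2 u3 t)) t.
Proof. apply (continuous_comp_eta (d2F nu a) (-nu) a); auto using continuous_d2F. Qed.

Lemma T_pos : 0 < T nu a u2 u3.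
Proof.
  unfold T. apply RInt_gt_0; [generalize PI_RGT_0; lra | |].
  - intros t _. apply Rmult_lt_0_compat; [lra|]. now apply F_pos, eta_between.
  - intros t _. apply continuous_Rmult; [apply continuous_Rconst|].
    apply (continuous_comp_eta (F nu a) (-nu) a); auto using continuous_F.
Qed.

Lemma dT2_pos : 0 < dT2 nu a u2 u3.
Proof.
  unfold dT2. apply RInt_gt_0; [generalize PI_RGT_0; lra | |].
  - intros t Ht. destruct (sin_cos_pos t Ht). apply Rmult_lt_0_compat.
    + unfold sn2. nra.
    + now apply dF_pos, eta_between.
  - intros t _. apply continuous_Rmult; [|apply continuous_dF_eta].
    apply continuous_Rmult; auto using continuous_Rconst, continuous_sn2.
Qed.

Lemma dT3_pos : 0 < dT3 nu a u2 u3.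
Proof.
  unfold dT3. apply RInt_gt_0; [generalize PI_RGT_0; lra | |].
  - intros t Ht. destruct (sin_cos_pos t Ht). apply Rmult_lt_0_compat.
    + unfold cs2. nra.
    + now apply dF_pos, eta_between.
  - intros t _. apply continuous_Rmult; [|apply continuous_dF_eta].
    apply continuous_Rmult; auto using continuous_Rconst, continuous_cs2.
Qed.

End Derivatives.

(** * [lambda2 - lambda3] in terms of [Phi] *)

Definition phi nu a b u x := d2F nu a x * sqrt ((x - b) * (u - x)).
Definition Phi nu a b u : R := RInt (phi nu a b u) b u.

Section Difference.

Variables nu a b u : R.
Hypotheses (Hb : -nu < b) (Hu : b < u < a).

Let b_range : -nu < b < a.
Proof. lra. Qed.

Let u_range : -nu < u < a.
Proof. lra. Qed.

(* [2 (sin^2 - cos^2)] is the derivative of [-2 sin cos], which vanishes at [0] and [pi/2]. *)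
Lemma dT2_sub_dT3_by_parts :
  dT2 nu a u b - dT3 nu a u b =
  RInt (fun t => 4 * (u - b) * sn2 t * cs2 t * d2F nu a (eta u b t)) 0 (PI / 2).
Proof.
  set (f := fun t => -2 * sin t * cos t).
  set (f' := fun t => 2 * (sn2 t - cs2 t)).
  set (g := fun t => dF nu a (eta u b t)).
  set (g' := fun t => 2 * (u - b) * sin t * cos t * d2F nu a (eta u b t)).
  assert (Hfg' : forall t, continuous (fun t => f t * g' t) t).
  { intros t. unfold f, g'. apply continuous_Rmult; [apply continuous_sin_cos|].
    apply continuous_Rmult; [apply continuous_sin_cos | now apply continuous_d2F_eta]. }
  assert (Parts : is_RInt (fun t => f' t * g t) 0 (PI / 2)
     (f (PI / 2) * g (PI / 2) - f 0 * g 0 - RInt (fun t => f t * g' t) 0 (PI / 2))).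
  { apply (is_RInt_scal_derive_l (V:=R_CompleteNormedModule) f g f' g').
    - intros t _. unfold f, f', sn2, cs2. auto_derive; auto. ring.
    - intros t _. apply (is_derive_comp (dF nu a) (eta u b)); [|apply is_derive_eta].
      apply is_derive_dF, eta_between; lra.
    - intros t _. unfold f'. apply continuous_Rmult; [apply continuous_Rconst|].
      apply continuous_Rminus; auto using continuous_sn2, continuous_cs2.
    - intros t _. unfold g'. apply continuous_Rmult; [apply continuous_sin_cos | now apply continuous_d2F_eta].
    - apply (RInt_correct (V:=R_CompleteNormedModule)).
      apply (ex_RInt_Rcont _ 0 (PI / 2)); auto; generalize PI_RGT_0; lra. }
  unfold f at 1 2 in Parts. rewrite cos_PI2, sin_0, !Rmult_0_r, !Rmult_0_l, Rminus_0_r in Parts.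
  unfold dT2, dT3. rewrite <- RInt_Rminus.
  - transitivity (RInt (fun t => f' t * g t) 0 (PI / 2)).
    { apply RInt_Rext. intros t _. unfold f', g. ring. }
    rewrite (is_RInt_unique _ _ _ _ Parts).
    replace (0 - RInt (fun t => f t * g' t) 0 (PI / 2))
      with (-1 * RInt (fun t => f t * g' t) 0 (PI / 2)) by ring.
    rewrite <- (RInt_Rscal (fun t => f t * g' t) (-1)).
    + apply RInt_Rext. intros t _. unfold f, g', sn2, cs2. ring.
    + apply (ex_RInt_Rcont _ 0 (PI / 2)); auto; generalize PI_RGT_0; lra.
  - apply (ex_RInt_Rcont _ 0 (PI / 2)); [|generalize PI_RGT_0; lra..].
    intros t _. apply continuous_Rmult; [|now apply continuous_dF_eta].
    apply continuous_Rmult; auto using continuous_Rconst, continuous_sn2.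
  - apply (ex_RInt_Rcont _ 0 (PI / 2)); [|generalize PI_RGT_0; lra..].
    intros t _. apply continuous_Rmult; [|now apply continuous_dF_eta].
    apply continuous_Rmult; auto using continuous_Rconst, continuous_cs2.
Qed.

Lemma continuous_phi x : b <= x <= u -> continuous (phi nu a b u) x.
Proof.
  intros. unfold phi. apply continuous_Rmult; [apply continuous_d2F; lra|].
  apply continuous_sqrt_comp.
  apply continuous_Rmult; apply continuous_Rminus; auto using continuous_Rid, continuous_Rconst.
Qed.

Lemma RInt_d2F_eta_eq_Phi :
  RInt (fun t => 4 * (u - b) * sn2 t * cs2 t * d2F nu a (eta u b t)) 0 (PI / 2) = 2 * Phi nu a b u / (u - b).
Proof.
  set (k := phi nu a b u).
  assert (Sub := RInt_comp (V:=R_CompleteNormedModule) k (eta u b)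
     (fun t => 2 * (u - b) * sin t * cos t) 0 (PI / 2)).
  simpl in Sub. rewrite eta_0, eta_PI2 in Sub.
  assert (PI2 : 0 < PI / 2) by (generalize PI_RGT_0; lra).
  rewrite Rmin_left, Rmax_right in Sub by lra.
  specialize (Sub ltac:(intros t Ht; apply continuous_phi, eta_le; lra)
                  ltac:(intros t Ht; split; [apply is_derive_eta | apply continuous_sin_cos])).
  assert (Hk : forall t, continuous (fun t => 2 * (u - b) * sin t * cos t * k (eta u b t)) t).
  { intros t. apply continuous_Rmult; [apply continuous_sin_cos|].
    apply continuous_Rcomp with (f := eta u b); [apply continuous_eta|].
    apply continuous_phi, eta_le; lra. }
  unfold Phi. fold k. rewrite <- Sub.
  apply (@eq_trans R _ (RInt (fun t => 2 / (u - b) * (2 * (u - b) * sin t * cos t * k (eta u b t))) 0 (PI / 2))).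
  - apply RInt_Rext. rewrite Rmin_left, Rmax_right by lra. intros t Ht.
    destruct (sin_cos_pos t Ht) as [Hs Hc].
    unfold k, phi. rewrite eta_gap_product, sqrt_square by (repeat apply Rmult_le_pos; lra).
    unfold sn2, cs2. field. lra.
  - rewrite RInt_Rscal by (apply (ex_RInt_Rcont _ 0 (PI / 2)); auto; lra).
    match goal with |- _ * ?I1 = _ * ?I2 / _ => replace I2 with I1 by (apply RInt_Rext; reflexivity) end.
    field. lra.
Qed.

Lemma dT2_sub_dT3 : dT2 nu a u b - dT3 nu a u b = 2 * Phi nu a b u / (u - b).
Proof. now rewrite dT2_sub_dT3_by_parts, RInt_d2F_eta_eq_Phi. Qed.

Lemma dI2_eq : dI2 nu a u b = dT2 nu a u b.
Proof.
  unfold dI2. apply is_derive_unique, is_derive_ext_loc with (fun x => T nu a x b).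
  - eapply filter_imp; [|apply (locally_interval b a u Hu)].
    intros x Hx. symmetry. apply Iint_eq_T; lra.
  - now apply is_derive_T_u2.
Qed.

Lemma dI3_eq : dI3 nu a u b = dT3 nu a u b.
Proof.
  unfold dI3. apply is_derive_unique, is_derive_ext_loc with (fun x => T nu a u x).
  - eapply filter_imp; [|apply (locally_interval (-nu) u b ltac:(lra))].
    intros x Hx. symmetry. apply Iint_eq_T; lra.
  - now apply is_derive_T_u3.
Qed.

Lemma lambda2_sub_lambda3 :
  lambda2 nu a u b - lambda3 nu a u b =
  T nu a u b / (dT2 nu a u b * dT3 nu a u b) * (dT2 nu a u b - dT3 nu a u b).
Proof.
  unfold lambda2, lambda3. rewrite dI2_eq, dI3_eq, Iint_eq_T by lra.
  assert (0 < dT2 nu a u b) by now apply dT2_pos.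
  assert (0 < dT3 nu a u b) by now apply dT3_pos.
  field. lra.
Qed.

Lemma lambda_gap_factor :
  exists k, 0 < k /\ lambda2 nu a u b - lambda3 nu a u b = k * Phi nu a b u.
Proof.
  exists (T nu a u b / (dT2 nu a u b * dT3 nu a u b) * (2 / (u - b))).
  assert (0 < T nu a u b) by (apply T_pos; lra).
  assert (0 < dT2 nu a u b) by (apply dT2_pos; lra).
  assert (0 < dT3 nu a u b) by (apply dT3_pos; lra).
  split.
  - apply Rmult_lt_0_compat; apply Rdiv_lt_0_compat; try nra; lra.
  - rewrite lambda2_sub_lambda3, dT2_sub_dT3 by lra. field. lra.
Qed.

End Difference.

(** * The sign of [Phi] *)

Lemma continuity_pt_Phi nu a b u : -nu < b -> b < u < a -> continuity_pt (Phi nu a b) u.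
Proof.
  intros. apply continuity_pt_filterlim, (ex_derive_continuous (Phi nu a b)).
  apply ex_derive_ext_loc with (fun v => (v - b) / 2 * (dT2 nu a v b - dT3 nu a v b)).
  - eapply filter_imp; [|apply (locally_interval b a u H0)]. intros v Hv. simpl.
    rewrite dT2_sub_dT3 by lra. field. lra.
  - apply ex_derive_mult; [auto_derive; auto|].
    eexists. apply (is_derive_minus (fun v => dT2 nu a v b) (fun v => dT3 nu a v b));
      [apply is_derive_dT2 | apply is_derive_dT3]; lra.
Qed.

Section PhiAnalysis.

Variables nu a b : R.
Hypotheses (Hb : -nu < b) (Hbx : b < infl nu a).

Local Notation x0 := (infl nu a).
Local Notation x1 := ((infl nu a + a) / 2).

Let Hx0 : -nu < x0 < a.
Proof. unfold infl in *. lra. Qed.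

Lemma ex_RInt_phi u p q : b < u < a -> b <= p <= u -> b <= q <= u -> ex_RInt (phi nu a b u) p q.
Proof. intros. apply (ex_RInt_Rcont _ b u); auto. intros. apply continuous_phi; lra. Qed.

Lemma Phi_neg u : b < u <= x0 -> Phi nu a b u < 0.
Proof.
  intros Hu. unfold Phi. apply Rlt_le_trans with (RInt (fun _ => 0) b u).
  - apply RInt_lt; [lra | intros; apply continuous_Rconst | intros; apply continuous_phi; lra |].
    intros x Hx. unfold phi. assert (d2F nu a x < 0) by (apply d2F_neg; lra).
    assert (0 < sqrt ((x - b) * (u - x))) by (apply sqrt_lt_R0; nra). nra.
  - rewrite RInt_Rconst. lra.
Qed.

(* Dividing [Phi U] by [sqrt (U - x0)] moves the dependence on [U] into this weight, which
   decreases in [U] where [d2F < 0] and increases where [d2F > 0]. *)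
Definition rho x U := sqrt (x - b) * sqrt ((U - x) / (U - x0)).

Definition Psi U := Phi nu a b U / sqrt (U - x0).

Lemma continuous_rho U x : continuous (fun x => rho x U) x.
Proof.
  unfold rho. apply continuous_Rmult; apply continuous_sqrt_comp.
  - apply continuous_Rminus; auto using continuous_Rid, continuous_Rconst.
  - apply continuous_Rmult; [apply continuous_Rminus|]; auto using continuous_Rid, continuous_Rconst.
Qed.

Lemma ex_RInt_d2F_rho U p q : U < a -> b <= p <= U -> b <= q <= U ->
  ex_RInt (fun x => d2F nu a x * rho x U) p q.
Proof.
  intros. apply (ex_RInt_Rcont _ b U); auto. intros.
  apply continuous_Rmult; [apply continuous_d2F; lra | apply continuous_rho].
Qed.

Lemma Psi_eq U : x0 < U < a -> Psi U = RInt (fun x => d2F nu a x * rho x U) b U.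
Proof.
  intros. unfold Psi, Phi, Rdiv. rewrite Rmult_comm, <- RInt_Rscal by (apply ex_RInt_phi; lra).
  apply RInt_Rext. rewrite Rmin_left, Rmax_right by lra. intros x Hx.
  unfold phi, rho. rewrite sqrt_mult_alt, sqrt_div_alt by lra.
  assert (0 < sqrt (U - x0)) by (apply sqrt_lt_R0; lra). field. lra.
Qed.

Lemma rho_antitone x u1 u2 : b < x <= x0 -> x0 < u1 < u2 -> rho x u2 <= rho x u1.
Proof.
  intros. unfold rho. apply Rmult_le_compat_l; [apply sqrt_pos|]. apply sqrt_le_1_alt.
  apply Rmult_le_reg_r with ((u1 - x0) * (u2 - x0)); [nra|].
  field_simplify; nra.
Qed.

Lemma rho_increment x u1 u2 : x0 < x < u1 -> u1 < u2 < a ->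
  sqrt (x0 - b) * (u2 - u1) / (2 * (u1 - x0) * (a - x0)) * (x - x0) <= rho x u2 - rho x u1.
Proof.
  intros. unfold rho.
  set (p1 := (u1 - x) / (u1 - x0)). set (p2 := (u2 - x) / (u2 - x0)).
  assert (Ed : p2 - p1 = (x - x0) * (u2 - u1) / ((u1 - x0) * (u2 - x0))) by (unfold p1, p2; field; lra).
  assert (0 <= p1) by (unfold p1; apply Rdiv_le_0_compat; lra).
  assert (0 <= p2 - p1) by (rewrite Ed; apply Rdiv_le_0_compat; nra).
  assert (p2 <= 1) by (unfold p2; apply Rmult_le_reg_r with (u2 - x0); [lra|]; field_simplify; lra).
  assert (Hs := sqrt_sub_ge_half p1 p2 ltac:(lra) ltac:(lra)).
  assert (Hsb : sqrt (x0 - b) <= sqrt (x - b)) by (apply sqrt_le_1_alt; lra).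
  assert (0 <= sqrt (x0 - b)) by apply sqrt_pos.
  assert (Hd : (x - x0) * (u2 - u1) / ((u1 - x0) * (a - x0)) <= p2 - p1).
  { rewrite Ed. apply Rmult_le_compat_l; [nra|]. apply Rinv_le_contravar; [nra|].
    apply Rmult_le_compat_l; lra. }
  assert (0 <= (x - x0) * (u2 - u1) / ((u1 - x0) * (a - x0))) by (apply Rdiv_le_0_compat; nra).
  replace (sqrt (x0 - b) * (u2 - u1) / (2 * (u1 - x0) * (a - x0)) * (x - x0))
    with (sqrt (x0 - b) * (((x - x0) * (u2 - u1) / ((u1 - x0) * (a - x0))) / 2)) by (field; lra).
  rewrite <- Rmult_minus_distr_l.
  apply Rle_trans with (sqrt (x0 - b) * (sqrt p2 - sqrt p1)).
  - apply Rmult_le_compat_l; lra.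
  - apply Rmult_le_compat_r; lra.
Qed.

Definition Q u1 : R := RInt (fun x => d2F nu a x * (x - x0)) x0 u1.

Definition slope u1 := sqrt (x0 - b) * Q u1 / (2 * (u1 - x0) * (a - x0)).

Lemma slope_pos u1 : x0 < u1 < a -> 0 < slope u1.
Proof.
  intros. unfold slope. assert (0 < sqrt (x0 - b)) by (apply sqrt_lt_R0; lra).
  assert (0 < Q u1).
  { unfold Q. apply RInt_gt_0; [lra| |].
    - intros x Hx. apply Rmult_lt_0_compat; [apply d2F_pos|]; lra.
    - intros x Hx. apply continuous_Rmult; [apply continuous_d2F; lra|].
      apply continuous_Rminus; auto using continuous_Rid, continuous_Rconst. }
  apply Rdiv_lt_0_compat; [nra|]. repeat apply Rmult_lt_0_compat; lra.
Qed.

Lemma Psi_increment u1 u2 : x0 < u1 -> u1 < u2 < a -> slope u1 * (u2 - u1) <= Psi u2 - Psi u1.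
Proof.
  intros H1 H2. rewrite !Psi_eq by lra.
  set (f2 := fun x => d2F nu a x * rho x u2).
  set (f1 := fun x => d2F nu a x * rho x u1).
  set (d := fun x => d2F nu a x * (rho x u2 - rho x u1)).
  assert (exd : forall p q, b <= p <= u1 -> b <= q <= u1 -> ex_RInt d p q).
  { intros. apply (ex_RInt_Rcont _ b u1); auto. intros.
    apply continuous_Rmult; [apply continuous_d2F; lra|].
    apply continuous_Rminus; apply continuous_rho. }
  assert (Split2 : RInt f2 b u2 = RInt f2 b u1 + RInt f2 u1 u2).
  { symmetry. apply (RInt_Chasles (V:=R_CompleteNormedModule)); apply ex_RInt_d2F_rho; lra. }
  assert (SplitD : RInt f2 b u1 - RInt f1 b u1 = RInt d b x0 + RInt d x0 u1).
  { rewrite <- RInt_Rminus by (apply ex_RInt_d2F_rho; lra).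
    transitivity (RInt d b u1); [apply RInt_Rext; intros; unfold d, f1, f2; ring|].
    symmetry. apply (RInt_Chasles (V:=R_CompleteNormedModule)); apply exd; lra. }
  assert (Tail : 0 <= RInt f2 u1 u2).
  { apply RInt_ge_0; [lra | apply ex_RInt_d2F_rho; lra |]. intros x Hx. unfold f2.
    apply Rmult_le_pos; [left; apply d2F_pos; lra|].
    unfold rho. apply Rmult_le_pos; apply sqrt_pos. }
  assert (Left : 0 <= RInt d b x0).
  { apply RInt_ge_0; [lra | apply exd; lra |]. intros x Hx. unfold d.
    assert (d2F nu a x < 0) by (apply d2F_neg; lra).
    assert (rho x u2 <= rho x u1) by (apply rho_antitone; lra). nra. }
  set (kap := sqrt (x0 - b) * (u2 - u1) / (2 * (u1 - x0) * (a - x0))).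
  assert (Right : kap * Q u1 <= RInt d x0 u1).
  { unfold Q. rewrite <- RInt_Rscal.
    2:{ apply (ex_RInt_Rcont _ x0 u1); try lra. intros. apply continuous_Rmult; [apply continuous_d2F; lra|].
        apply continuous_Rminus; auto using continuous_Rid, continuous_Rconst. }
    apply RInt_le; [lra | | apply exd; lra |].
    - apply (ex_RInt_Rcont _ x0 u1); try lra. intros. apply continuous_Rmult; [apply continuous_Rconst|].
      apply continuous_Rmult; [apply continuous_d2F; lra|].
      apply continuous_Rminus; auto using continuous_Rid, continuous_Rconst.
    - intros x Hx. unfold d. assert (0 < d2F nu a x) by (apply d2F_pos; lra).
      assert (Hr := rho_increment x u1 u2 ltac:(lra) ltac:(lra)). fold kap in Hr.
      replace (kap * (d2F nu a x * (x - x0))) with (d2F nu a x * (kap * (x - x0))) by ring.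
      apply Rmult_le_compat_l; lra. }
  replace (slope u1 * (u2 - u1)) with (kap * Q u1) by (unfold slope, kap; field; lra).
  fold f1 f2. lra.
Qed.

Lemma Phi_eq_Psi U : x0 < U -> Phi nu a b U = Psi U * sqrt (U - x0).
Proof.
  intros. unfold Psi. assert (0 < sqrt (U - x0)) by (apply sqrt_lt_R0; lra). field. lra.
Qed.

(* [d2F] on [[a - 2e, a - 3e/2]] is bounded below by [d2F_ge], and there
   [sqrt ((x - b) (a - e - x)) >= sqrt ((x1 - b) e / 2)]. *)
Definition blowup_const := (4 * (x1 + nu) - (a + nu)) * sqrt (x1 - b) / (64 * sqrt (a + nu)).

Lemma blowup_const_pos : 0 < blowup_const.
Proof.
  unfold blowup_const. assert (0 < sqrt (x1 - b)) by (apply sqrt_lt_R0; lra).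
  assert (0 < sqrt (a + nu)) by (apply sqrt_lt_R0; lra).
  apply Rdiv_lt_0_compat; [|lra]. apply Rmult_lt_0_compat; [unfold infl in *; lra | lra].
Qed.

Lemma RInt_phi_near_a_ge e : 0 < e <= (a - x1) / 2 ->
  blowup_const / e <= RInt (phi nu a b (a - e)) (a - 2 * e) (a - 3 * e / 2).
Proof.
  intros He.
  set (Fm := (a + nu) * (4 * (x1 + nu) - (a + nu)) /
             (4 * ((a + nu) * sqrt (a + nu)) * ((2 * e) * (2 * e) * sqrt (2 * e)))).
  set (Sm := sqrt ((x1 - b) * (e / 2))).
  assert (Hs := sqrt_lt_R0 (e / 2) ltac:(lra)).
  assert (HsA := sqrt_lt_R0 (a + nu) ltac:(lra)).
  assert (E2e : sqrt (2 * e) = 2 * sqrt (e / 2)).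
  { replace (2 * e) with ((2 * 2) * (e / 2)) by field.
    rewrite sqrt_mult_alt, sqrt_square by lra. ring. }
  assert (E : (a - 3 * e / 2 - (a - 2 * e)) * (Fm * Sm) = blowup_const / e).
  { unfold Fm, Sm, blowup_const. rewrite E2e, sqrt_mult_alt by lra. field. repeat split; lra. }
  rewrite <- E, <- RInt_Rconst. apply RInt_le; [lra | apply ex_RInt_const | apply ex_RInt_phi; lra |].
  intros x Hx. unfold phi.
  assert (HF : Fm <= d2F nu a x) by (apply (d2F_ge nu a x1 x e); unfold infl in *; lra).
  assert (HS : Sm <= sqrt ((x - b) * (a - e - x))) by (apply sqrt_le_1_alt, Rmult_le_compat; lra).
  assert (0 <= Fm).
  { unfold Fm. apply Rmult_le_pos; [apply Rmult_le_pos; unfold infl in *; lra|].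
    left. apply Rinv_0_lt_compat. assert (0 < sqrt (2 * e)) by (apply sqrt_lt_R0; lra).
    repeat apply Rmult_lt_0_compat; lra. }
  apply Rmult_le_compat; auto. apply sqrt_pos.
Qed.

Lemma RInt_phi_left_ge u : x0 < u < a ->
  (a - b) / 2 * RInt (d2F nu a) b x0 <= RInt (phi nu a b u) b x0.
Proof.
  intros Hu. rewrite <- RInt_Rscal by (apply (ex_RInt_Rcont _ b x0); try lra; intros; apply continuous_d2F; lra).
  apply RInt_le; [lra | | apply ex_RInt_phi; lra |].
  - apply (ex_RInt_Rcont _ b x0); try lra. intros. apply continuous_Rmult;
      [apply continuous_Rconst | apply continuous_d2F; lra].
  - intros x Hx. unfold phi. assert (d2F nu a x < 0) by (apply d2F_neg; lra).
    assert (sqrt ((x - b) * (u - x)) <= (a - b) / 2).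
    { rewrite <- (sqrt_square ((a - b) / 2)) by lra. apply sqrt_le_1_alt.
      assert (0 <= (u - b - 2 * (x - b)) * (u - b - 2 * (x - b))) by apply Rle_0_sqr.
      assert ((u - b) * (u - b) <= (a - b) * (a - b)) by (apply Rmult_le_compat; lra).
      nra. }
    assert (0 <= sqrt ((x - b) * (u - x))) by apply sqrt_pos. nra.
Qed.

Lemma Phi_near_a_ge e : 0 < e <= (a - x1) / 2 ->
  (a - b) / 2 * RInt (d2F nu a) b x0 + blowup_const / e <= Phi nu a b (a - e).
Proof.
  intros He. assert (Hu : a - 3 * e / 2 < a - e < a) by lra.
  set (u := a - e) in *. set (k := phi nu a b u).
  assert (exk : forall p q, b <= p <= u -> b <= q <= u -> ex_RInt k p q)
    by (intros; apply ex_RInt_phi; lra).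
  assert (Split : Phi nu a b u = RInt k b x0 + RInt k x0 (a - 2 * e)
                                 + RInt k (a - 2 * e) (a - 3 * e / 2) + RInt k (a - 3 * e / 2) u).
  { unfold Phi. fold k.
    rewrite <- (RInt_Chasles (V:=R_CompleteNormedModule) k b x0 u) by (apply exk; lra).
    rewrite <- (RInt_Chasles (V:=R_CompleteNormedModule) k x0 (a - 2 * e) u) by (apply exk; lra).
    rewrite <- (RInt_Chasles (V:=R_CompleteNormedModule) k (a - 2 * e) (a - 3 * e / 2) u)
      by (apply exk; lra).
    unfold plus. simpl. ring. }
  assert (Hpos : forall p q, x0 <= p <= q -> q <= u -> 0 <= RInt k p q).
  { intros p q Hpq Hq. apply RInt_ge_0; [lra | apply exk; lra |]. intros x Hx.
    unfold k, phi. apply Rmult_le_pos; [left; apply d2F_pos; lra | apply sqrt_pos]. }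
  assert (H1 := RInt_phi_left_ge u ltac:(lra)). fold k in H1.
  assert (H2 := Hpos x0 (a - 2 * e) ltac:(lra) ltac:(lra)).
  assert (H3 := RInt_phi_near_a_ge e He). fold u k in H3.
  assert (H4 := Hpos (a - 3 * e / 2) u ltac:(lra) ltac:(lra)).
  lra.
Qed.

Lemma Phi_pos_near_a : exists u, x0 < u < a /\ 0 < Phi nu a b u.
Proof.
  set (N := (a - b) / 2 * RInt (d2F nu a) b x0).
  assert (Hc := blowup_const_pos).
  assert (HN : 0 < 1 + Rabs N) by (generalize (Rabs_pos N); lra).
  set (e := Rmin ((a - x1) / 2) (blowup_const / (1 + Rabs N))).
  assert (He : 0 < e) by (apply Rmin_pos; [lra | now apply Rdiv_lt_0_compat]).
  assert (He1 : e <= (a - x1) / 2) by apply Rmin_l.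
  assert (Hce : 1 + Rabs N <= blowup_const / e).
  { apply Rmult_le_reg_r with e; [lra|]. unfold Rdiv. rewrite Rmult_assoc, Rinv_l, Rmult_1_r by lra.
    rewrite Rmult_comm. apply Rmult_le_reg_r with (/ (1 + Rabs N)); [now apply Rinv_0_lt_compat|].
    rewrite Rmult_assoc, Rinv_r, Rmult_1_r by lra. apply Rmin_r. }
  exists (a - e). split; [lra|].
  assert (H := Phi_near_a_ge e ltac:(lra)). fold N in H.
  generalize (Rle_abs (- N)). rewrite Rabs_Ropp. lra.
Qed.

Lemma Phi_sign_change : exists us, x0 < us < a /\ Phi nu a b us = 0 /\
  forall u, b < u < a -> (u < us -> Phi nu a b u < 0) /\ (us < u -> 0 < Phi nu a b u).
Proof.
  destruct (Phi_pos_near_a) as [u1 [Hu1 Hpos]].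
  assert (Hneg : Phi nu a b x0 < 0) by (apply Phi_neg; lra).
  destruct (Ranalysis5.IVT_interv (Phi nu a b) x0 u1) as [us [Hus Hz]]; try lra.
  { intros z Hz. apply continuity_pt_Phi; lra. }
  assert (Hus' : x0 < us < u1).
  { split; apply Rnot_le_lt; intros Hle.
    - replace us with x0 in Hz by lra. lra.
    - replace us with u1 in Hz by lra. lra. }
  assert (HPsi : Psi us = 0) by (unfold Psi; rewrite Hz; field; apply Rgt_not_eq, sqrt_lt_R0; lra).
  exists us. split; [lra|]. split; [exact Hz|]. intros u Hu. split; intros Hc.
  - destruct (Rle_or_lt u x0); [apply Phi_neg; lra|].
    assert (Hi := Psi_increment u us ltac:(lra) ltac:(lra)).
    assert (Hs := slope_pos u ltac:(lra)).
    rewrite Phi_eq_Psi by lra. apply Rmult_neg_pos; [nra | apply sqrt_lt_R0; lra].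
  - assert (Hi := Psi_increment us u ltac:(lra) ltac:(lra)).
    assert (Hs := slope_pos us ltac:(lra)).
    rewrite Phi_eq_Psi by lra. apply Rmult_lt_0_compat; [nra | apply sqrt_lt_R0; lra].
Qed.

Lemma dT2_sub_dT3_ge us y : x0 < us -> Phi nu a b us = 0 -> us < y < a ->
  2 * sqrt (us - x0) * slope us / (a - b) * (y - us) <= dT2 nu a y b - dT3 nu a y b.
Proof.
  intros Hus Hz Hy. rewrite dT2_sub_dT3 by lra.
  assert (HPsi : Psi us = 0) by (unfold Psi; rewrite Hz; field; apply Rgt_not_eq, sqrt_lt_R0; lra).
  assert (Hi := Psi_increment us y Hus Hy).
  assert (Hs := slope_pos us ltac:(lra)).
  assert (Hsy : sqrt (us - x0) <= sqrt (y - x0)) by (apply sqrt_le_1_alt; lra).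
  assert (0 < sqrt (us - x0)) by (apply sqrt_lt_R0; lra).
  assert (HPhi : sqrt (us - x0) * (slope us * (y - us)) <= Phi nu a b y).
  { rewrite Phi_eq_Psi by lra. rewrite (Rmult_comm (sqrt (us - x0))).
    apply Rmult_le_compat; try lra. apply Rmult_le_pos; lra. }
  replace (2 * sqrt (us - x0) * slope us / (a - b) * (y - us))
    with (2 * (sqrt (us - x0) * (slope us * (y - us))) / (a - b)) by (field; lra).
  assert (0 <= sqrt (us - x0) * (slope us * (y - us))) by (apply Rmult_le_pos; [lra | apply Rmult_le_pos; lra]).
  unfold Rdiv. apply Rmult_le_compat; [lra | left; apply Rinv_0_lt_compat; lra | lra |].
  apply Rinv_le_contravar; lra.
Qed.

Lemma ddT2_sub_ddT3_pos us : x0 < us < a -> Phi nu a b us = 0 ->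
  0 < ddT2 nu a us b - ddT3 nu a us b.
Proof.
  intros Hus Hz.
  assert (Hq : dT2 nu a us b - dT3 nu a us b = 0) by (rewrite dT2_sub_dT3, Hz by lra; field; lra).
  assert (Hm : 0 < 2 * sqrt (us - x0) * slope us / (a - b)).
  { assert (0 < sqrt (us - x0)) by (apply sqrt_lt_R0; lra).
    assert (0 < slope us) by (apply slope_pos; lra).
    apply Rdiv_lt_0_compat; [nra | lra]. }
  eapply Rlt_le_trans; [exact Hm|].
  apply (derive_ge_of_linear_minorant (fun v => dT2 nu a v b - dT3 nu a v b) us _ _ (a - us)).
  - apply (is_derive_minus (fun v => dT2 nu a v b) (fun v => dT3 nu a v b));
      [apply is_derive_dT2 | apply is_derive_dT3]; lra.
  - lra.
  - intros y Hy. rewrite Hq, Rplus_0_l. apply dT2_sub_dT3_ge; lra.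
Qed.

Lemma lambda_gap_simple_root us : x0 < us < a -> Phi nu a b us = 0 ->
  exists d, is_derive (fun u => lambda2 nu a u b - lambda3 nu a u b) us d /\ 0 < d.
Proof.
  intros Hus Hz.
  set (p := fun u => T nu a u b / (dT2 nu a u b * dT3 nu a u b)).
  set (q := fun u => dT2 nu a u b - dT3 nu a u b).
  assert (0 < T nu a us b) by (apply T_pos; lra).
  assert (0 < dT2 nu a us b) by (apply dT2_pos; lra).
  assert (0 < dT3 nu a us b) by (apply dT3_pos; lra).
  exists (p us * (ddT2 nu a us b - ddT3 nu a us b)). split.
  - apply is_derive_ext_loc with (fun u => p u * q u).
    + eapply filter_imp; [|apply (locally_interval b a us ltac:(lra))]. intros u Hu.
      symmetry. now apply lambda2_sub_lambda3.
    + apply is_derive_mult_root.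
      * unfold p. auto_derive. repeat split.
        -- eexists. apply is_derive_T_u2; lra.
        -- eexists. apply is_derive_dT2; lra.
        -- eexists. apply is_derive_dT3; lra.
        -- apply Rgt_not_eq, Rmult_lt_0_compat; lra.
      * apply (is_derive_minus (fun v => dT2 nu a v b) (fun v => dT3 nu a v b));
          [apply is_derive_dT2 | apply is_derive_dT3]; lra.
      * unfold q. rewrite dT2_sub_dT3, Hz by lra. field. lra.
  - apply Rmult_lt_0_compat; [apply Rdiv_lt_0_compat; nra | now apply ddT2_sub_ddT3_pos].
Qed.

End PhiAnalysis.

Theorem lemma4p4 (nu a b : R) :
  0 < b + nu -> b + nu < (a + nu) / 4 ->
  let g := fun u2 => lambda2 nu a u2 b - lambda3 nu a u2 b in
  exists ustar : R,
    b < ustar < a /\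
    g ustar = 0 /\
    (exists d : R, is_derive g ustar d /\ d <> 0) /\
    (forall u2, b < u2 < a -> g u2 = 0 -> u2 = ustar) /\
    (forall u2, ustar < u2 < a -> 0 < g u2) /\
    (forall u2, b < u2 < ustar -> g u2 < 0).
Proof.
  intros H1 H2 g.
  assert (Hb : -nu < b) by lra.
  assert (Hbx : b < infl nu a) by (unfold infl; lra).
  destruct (Phi_sign_change nu a b Hb Hbx) as [us [Hus [Hz Hsign]]].
  assert (Hrange : b < us < a) by lra.
  assert (Hg : forall u, b < u < a -> exists k, 0 < k /\ g u = k * Phi nu a b u)
    by (intros; now apply lambda_gap_factor).
  exists us. split; [exact Hrange|]. split; [|split; [|split; [|split]]].
  - destruct (Hg us Hrange) as [k [_ E]]. rewrite E, Hz. ring.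
  - destruct (lambda_gap_simple_root nu a b Hb Hbx us Hus Hz) as [d [Hd Hd0]].
    exists d. split; [exact Hd | lra].
  - intros u Hu Hgu. destruct (Hg u Hu) as [k [Hk E]]. rewrite E in Hgu.
    destruct (Rtotal_order u us) as [Hlt | [Heq | Hgt]]; [exfalso | exact Heq | exfalso].
    + assert (Phi nu a b u < 0) by now apply Hsign. nra.
    + assert (0 < Phi nu a b u) by (apply Hsign; lra). nra.
  - intros u Hu. destruct (Hg u ltac:(lra)) as [k [Hk E]]. rewrite E.
    apply Rmult_lt_0_compat; [exact Hk | apply Hsign; lra].
  - intros u Hu. destruct (Hg u ltac:(lra)) as [k [Hk E]]. rewrite E.
    apply Rmult_pos_neg; [exact Hk | apply Hsign; lra].
Qed.
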